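(* Let $n\geq 2$ and $r\geq 4$ be integers and let $I_0\subseteq S=\Bbbk[\alpha_0,\ldots,\alpha_n]$ be the monomial ideal generated by all monomials of degree $r-2$ lying in the ideal $(\alpha_0,\ldots,\alpha_{n-2})$ except $\alpha_{n-2}\alpha_n^{r-3}$, together with $\alpha_{n-2}\alpha_n^{r-2}$ and $\alpha_{n-1}^r$. Then $\dim_\Bbbk\operatorname{Hom}_S(I_0,S/I_0)_0\leq\binom{n+r-2}{n}+2n-1$.
   Context: $\Bbbk$ algebraically closed, $S$ standard graded; $\operatorname{Hom}_S(M,N)_0$ denotes degree-preserving homomorphisms of graded $S$-modules. *)

From HB Require Import structures.
From mathcomp Require Import all_boot all_order all_algebra.
From mathcomp Require Import mpoly.
Set Implicit Arguments. Unset Strict Implicit. Unset Printing Implicit Defensive.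
Import GRing.Theory.
Local Open Scope ring_scope.

Section Defs.
Variables (K : fieldType) (m : nat).
Local Notation S := {mpoly K[m]}.

Definition in_mideal (G : 'X_{1..m} -> Prop) (p : S) : Prop :=
  exists s : seq (S * 'X_{1..m}),
    (forall x, x \in s -> G x.2) /\ p = \sum_(x <- s) x.1 * 'X_[x.2].

(* A function f : S -> S represents a degree-preserving S-module homomorphism
   I -> S/I (I given by the membership predicate inI), phi(x) = class of f x,
   for x in I. *)
Definition graded_hom_to_quot (inI : S -> Prop) (f : S -> S) : Prop :=
  [/\ (forall x y, inI x -> inI y -> inI (f (x + y) - (f x + f y))),
      (forall (s x : S), inI x -> inI (f (s * x) - s * f x)) &
      (forall (d : nat) (x : S), inI x -> x \is d.-homog ->
          exists h : S, h \is d.-homog /\ inI (f x - h))].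

(* dim_K Hom_S(I, S/I)_0 <= N : any N+1 such homomorphisms are K-linearly
   dependent (as maps I -> S/I). *)
Definition hom0_dim_le (inI : S -> Prop) (N : nat) : Prop :=
  forall fs : 'I_N.+1 -> S -> S,
    (forall i, graded_hom_to_quot inI (fs i)) ->
    exists c : 'I_N.+1 -> K,
      (exists i, c i != 0) /\
      (forall x, inI x -> inI (\sum_(i < N.+1) c i *: fs i x)).
End Defs.

Definition I0_gen (n r : nat) (mu : 'X_{1..n.+1}) : Prop :=
  ((mdeg mu = r - 2)%N /\
   (exists j : 'I_n.+1, (j <= n - 2)%N /\ (0 < mu j)%N) /\
   mu <> (U_(inord (n - 2)) + U_(inord n) *+ (r - 3))%MM)
  \/ mu = (U_(inord (n - 2)) + U_(inord n) *+ (r - 2))%MM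
  \/ mu = (U_(inord (n - 1)) *+ r)%MM.

From HB Require Import structures.
From mathcomp Require Import all_boot all_order all_algebra.
From mathcomp Require Import mpoly.
From Stdlib Require Import Classical.
From mathcomp Require Import zify.
Set Implicit Arguments. Unset Strict Implicit. Unset Printing Implicit Defensive.
Import GRing.Theory.

(* A degree-0 homomorphism phi : I -> S/I into the quotient by a monomial
   ideal I is determined by its coefficient system C g u, the coefficient of
   X^u in phi(X^g) for generators g and standard monomials u (monomials not
   in I).  Such a system satisfies two linear constraints: syzygy
   compatibility (X^(g'-g) phi(X^g) = X^(g-g') phi(X^g')) and homogeneity.
   Hence if a list L of positions (g, u) determines every compatible system,
   then N+1 homomorphisms give N+1 vectors in K^(size L), which are dependent
   when size L <= N, and the dependency is a combination mapping I into I. *)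

Section MonomialIdeal.
Variables (K : fieldType) (m : nat) (G : 'X_{1..m} -> Prop).
Local Notation S := {mpoly K[m]}.
Local Notation inI := (@in_mideal K m G).
Local Open Scope ring_scope.

Definition mnm_in_ideal (u : 'X_{1..m}) : Prop := exists2 g, G g & (g <= u)%MM.

Lemma in_mideal0 : inI 0.
Proof. by exists [::]; rewrite big_nil. Qed.

Lemma in_midealD a b : inI a -> inI b -> inI (a + b).
Proof.
move=> [s1 [h1 ->]] [s2 [h2 ->]]; exists (s1 ++ s2); rewrite big_cat.
by split=> // x; rewrite mem_cat => /orP[/h1|/h2].
Qed.

Lemma in_midealM s a : inI a -> inI (s * a).
Proof.
move=> [s1 [h1 ->]]; exists [seq (s * x.1, x.2) | x <- s1]; split.
  by move=> x /mapP [y /h1 hy ->].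
by rewrite big_map mulr_sumr; apply: eq_bigr => x _; rewrite mulrA.
Qed.

Lemma in_midealB a b : inI a -> inI b -> inI (a - b).
Proof. by move=> ha hb; rewrite -mulN1r; apply/in_midealD/in_midealM. Qed.

Lemma in_midealZ c a : inI a -> inI (c *: a).
Proof. by rewrite -mul_mpolyC; apply: in_midealM. Qed.

Lemma in_mideal_gen g : G g -> inI 'X_[g].
Proof.
by move=> hg; exists [:: (1, g)]; rewrite big_seq1 mul1r; split=> // x /[!inE] /eqP->.
Qed.

Lemma in_mideal_sum (I : Type) (r : seq I) (F : I -> S) :
  (forall i, inI (F i)) -> inI (\sum_(i <- r) F i).
Proof.
move=> h; elim: r => [|x r ih]; first by rewrite big_nil; apply: in_mideal0.
by rewrite big_cons; apply: in_midealD.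
Qed.

Lemma mcoeffMX_div (q : S) g u : (g <= u)%MM -> (q * 'X_[g])@_u = q@_(u - g).
Proof. by move=> h; rewrite -{1}(submK h) addmC mcoeffMX. Qed.

Lemma mcoeffMX_ndiv (q : S) g u : ~~ (g <= u)%MM -> (q * 'X_[g])@_u = 0.
Proof.
move=> h; apply: memN_msupp_eq0; rewrite (perm_mem (msuppMX q g)).
by apply/negP => /mapP [m' _ e]; move: h; rewrite e lem_addr.
Qed.

Lemma mcoeff_in_mideal (p : S) u : inI p -> ~ mnm_in_ideal u -> p@_u = 0.
Proof.
move=> [s [hs ->]] hu; rewrite raddf_sum big_seq big1 // => x xs.
apply: mcoeffMX_ndiv; apply/negP => le; apply: hu; exists x.2 => //.
exact: hs.
Qed.

Lemma in_mideal_mcoeff (p : S) :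
  (forall u, ~ mnm_in_ideal u -> p@_u = 0) -> inI p.
Proof.
move=> h; rewrite (mpolyE p); apply: in_mideal_sum => u.
have [[g hg le]|nu] := classic (mnm_in_ideal u); last first.
  by rewrite h // scale0r; apply: in_mideal0.
by rewrite -(submK le) mpolyXD scalerAl; apply/in_midealM/in_mideal_gen.
Qed.

End MonomialIdeal.

Section HomCoefficients.
Variables (K : fieldType) (m : nat) (G : 'X_{1..m} -> Prop).
Local Notation S := {mpoly K[m]}.
Local Notation M := 'X_{1..m}.
Local Notation inI := (@in_mideal K m G).
Local Open Scope ring_scope.

Definition hom_coef (f : S -> S) (g u : M) : K := (f 'X_[g])@_u.

Definition shifted_coef (C : M -> M -> K) (g w u : M) : K :=
  if (w <= u)%MM then C g (u - w)%MM else 0.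

(* The two constraints every Hom_S(I, S/I)_0 imposes on its coefficients:
   X^(g'-g) phi(X^g) = X^(g-g') phi(X^g') (both equal phi(X^lcm(g,g'))),
   read at standard monomials, and homogeneity of degree 0. *)
Definition syzygy_compatible (C : M -> M -> K) : Prop :=
  forall g g' u, G g -> G g' -> ~ mnm_in_ideal G u ->
    shifted_coef C g (g' - g) u = shifted_coef C g' (g - g') u.

Definition degree_compatible (C : M -> M -> K) : Prop :=
  forall g u, G g -> ~ mnm_in_ideal G u -> mdeg u != mdeg g -> C g u = 0.

(* Both sides are the lcm of g and g'. *)
Lemma lcm_mnm_sym (g g' : M) : ((g' - g) + g = (g - g') + g')%MM.
Proof. by apply/mnmP => i; rewrite !mnmE; lia. Qed.

(* Both sides of the syzygy relation equal the coefficient of phi(X^lcm(g,g')). *)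
Lemma hom_coef_syzygy f : graded_hom_to_quot inI f ->
  syzygy_compatible (hom_coef f).
Proof.
move=> [_ hlin _] g g' u hg hg' hu.
have e1 := hlin 'X_[g' - g] _ (in_mideal_gen K hg).
have e2 := hlin 'X_[g - g'] _ (in_mideal_gen K hg').
rewrite -!mpolyXD lcm_mnm_sym in e1; rewrite -mpolyXD in e2.
have := mcoeff_in_mideal (in_midealB e2 e1) hu.
rewrite opprB addrC addrA subrK mcoeffB ![_ * f _]mulrC => /eqP; rewrite subr_eq0.
rewrite /shifted_coef /hom_coef => /eqP.
case: ifP => a; [rewrite (mcoeffMX_div _ a) | rewrite (mcoeffMX_ndiv _ (negbT a))].
all: by case: ifP => b; [rewrite (mcoeffMX_div _ b) | rewrite (mcoeffMX_ndiv _ (negbT b))].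
Qed.

Lemma hom_coef_degree f : graded_hom_to_quot inI f -> degree_compatible (hom_coef f).
Proof.
move=> [_ _ hdeg] g u hg hu hd.
have [h [hh hi]] := hdeg (mdeg g) 'X_[g] (in_mideal_gen K hg) ltac:(by rewrite dhomogX).
have := mcoeff_in_mideal hi hu; rewrite mcoeffB => /eqP; rewrite subr_eq0 => /eqP.
by rewrite /hom_coef => ->; apply: dhomog_nemf_coeff hh hd.
Qed.

Lemma hom_maps_into_ideal f :
  (forall x y, inI x -> inI y -> inI (f (x + y) - (f x + f y))) ->
  (forall s x, inI x -> inI (f (s * x) - s * f x)) ->
  (forall g u, G g -> ~ mnm_in_ideal G u -> hom_coef f g u = 0) ->
  forall x, inI x -> inI (f x).
Proof.
move=> hadd hlin hc x [s [hs ->]]; elim: s hs => [|a s ih] hs.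
  by have := hlin 0 0 (in_mideal0 _ _); rewrite big_nil !mul0r subr0.
have ha : G a.2 by apply: hs; rewrite inE eqxx.
have hs' y : y \in s -> G y.2 by move=> ys; apply: hs; rewrite inE ys orbT.
have hterm : inI (a.1 * 'X_[a.2]) by apply/in_midealM/in_mideal_gen.
have hrest : inI (\sum_(x <- s) x.1 * 'X_[x.2]) by exists s.
have hgen : inI (f 'X_[a.2]) by apply: in_mideal_mcoeff => u hu; apply: hc.
have := in_midealD (in_midealD (hadd _ _ hterm hrest)
  (in_midealD (hlin a.1 _ (in_mideal_gen K ha)) (in_midealM a.1 hgen))) (ih hs').
by rewrite big_cons subrK -addrA subrK.
Qed.

Section LinearCombination.
Variables (k : nat) (fs : 'I_k -> S -> S) (c : 'I_k -> K).
Hypothesis fs_hom : forall i, graded_hom_to_quot inI (fs i).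

Definition lincomb (x : S) : S := \sum_(i < k) c i *: fs i x.

Lemma lincomb_add x y : inI x -> inI y ->
  inI (lincomb (x + y) - (lincomb x + lincomb y)).
Proof.
move=> hx hy; rewrite /lincomb -big_split -sumrB /=.
apply: in_mideal_sum => i; rewrite -!scalerDr -scalerBr; apply: in_midealZ.
by case: (fs_hom i) => hadd _ _; apply: hadd.
Qed.

Lemma lincomb_mul s x : inI x -> inI (lincomb (s * x) - s * lincomb x).
Proof.
move=> hx; rewrite /lincomb mulr_sumr -sumrB /=.
apply: in_mideal_sum => i; rewrite -scalerAr -scalerBr; apply: in_midealZ.
by case: (fs_hom i) => _ hlin _; apply: hlin.
Qed.

Lemma hom_coef_lincomb g u : hom_coef lincomb g u = \sum_(i < k) c i * hom_coef (fs i) g u.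
Proof. by rewrite /hom_coef /lincomb raddf_sum; apply: eq_bigr => i _; apply: mcoeffZ. Qed.

Lemma lincomb_syzygy : syzygy_compatible (hom_coef lincomb).
Proof.
move=> g g' u hg hg' hu; have H i := hom_coef_syzygy (fs_hom i) hg hg' hu.
rewrite /shifted_coef; case: ifP => a; case: ifP => b; rewrite ?hom_coef_lincomb //.
- by apply: eq_bigr => i _; have := H i; rewrite /shifted_coef a b => ->.
- by rewrite big1 // => i _; have := H i; rewrite /shifted_coef a b => ->; rewrite mulr0.
- by rewrite big1 // => i _; have := H i; rewrite /shifted_coef a b => <-; rewrite mulr0.
Qed.

Lemma lincomb_degree : degree_compatible (hom_coef lincomb).
Proof.
move=> g u hg hu hd; rewrite hom_coef_lincomb big1 // => i _.
by rewrite (hom_coef_degree (fs_hom i) hg hu hd) mulr0.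
Qed.

End LinearCombination.

Lemma rows_dependent k l (A : 'M[K]_(k.+1, l)) : (l <= k)%N ->
  exists c : 'I_k.+1 -> K, (exists i, c i != 0) /\ forall j, \sum_i c i * A i j = 0.
Proof.
move=> hl; have : ~~ row_free A.
  by rewrite /row_free; apply: contraL (rank_leq_col A) => /eqP->; rewrite -ltnNge ltnS.
rewrite -kermx_eq0 => /matrix0Pn [i [j hij]].
exists (kermx A i); split; first by exists j.
move=> b; have := congr1 (fun B : 'M_(k.+1, l) => B i b) (mulmx_ker A).
by rewrite !mxE.
Qed.

Lemma hom0_dim_le_of_determining (L : seq (M * M)) (N : nat) :
  (size L <= N)%N ->
  (forall C, syzygy_compatible C -> degree_compatible C ->
     (forall x, x \in L -> C x.1 x.2 = 0) ->
     forall g u, G g -> ~ mnm_in_ideal G u -> C g u = 0) ->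
  hom0_dim_le inI N.
Proof.
move=> hsize hdet fs hfs.
pose x0 : M * M := (0%MM, 0%MM).
pose A := \matrix_(i < N.+1, j < size L)
  hom_coef (fs i) (nth x0 L j).1 (nth x0 L j).2.
have [c [hc hA]] := rows_dependent A hsize.
exists c; split => //; apply: hom_maps_into_ideal.
- exact: lincomb_add.
- exact: lincomb_mul.
apply: hdet; [exact: lincomb_syzygy | exact: lincomb_degree |].
move=> x hx; have hi : (index x L < size L)%N by rewrite index_mem.
rewrite hom_coef_lincomb; apply: eq_trans (hA (Ordinal hi)).
by apply: eq_bigr => i _; rewrite mxE /= nth_index.
Qed.

End HomCoefficients.

Section MonomialDivisors.
Variable m : nat.
Local Notation M := 'X_{1..m}.

Lemma lem_not_of_lt (u v : M) i : (v i < u i)%N -> ~~ (u <= v)%MM.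
Proof. by move=> h; apply/negP => /mnm_lepP /(_ i); rewrite leqNgt h. Qed.

Lemma lt_exponent_of_mdeg (v u : M) : (v <= u)%MM -> (mdeg v < mdeg u)%N ->
  exists i, (v i < u i)%N.
Proof.
move=> le lt; have [/existsP[i hi]|/existsPn h] := boolP [exists i, v i < u i].
  by exists i.
move: lt; rewrite !mdegE ltnNge => /negP []; apply: leq_sum => i _.
by rewrite leqNgt h.
Qed.

Lemma divisor_of_mdeg k (w u : M) : (w <= u)%MM -> (mdeg w <= k <= mdeg u)%N ->
  exists v : M, [/\ (w <= v)%MM, (v <= u)%MM & mdeg v = k].
Proof.
move=> wu /andP[h1]; have [e ->] : exists e, k = (mdeg w + e)%N.
  by exists (k - mdeg w)%N; lia.
elim: e => [|e ih] he; first by exists w; rewrite addn0 lepm_refl.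
have [v [wv vu dv]] := ih ltac:(lia).
have [i hi] := lt_exponent_of_mdeg vu ltac:(rewrite dv; lia).
exists (v + U_(i))%MM; split.
- by apply: lepm_trans wv _; apply: lem_addr.
- apply/mnm_lepP => j; rewrite mnmDE mnm1E; move/mnm_lepP: vu => /(_ j).
  by case: (eqVneq i j) => [<-|_] /=; lia.
- by rewrite mdegD mdeg1 dv; lia.
Qed.

End MonomialDivisors.

Section StandardMonomialsI0.
Variables (n r : nat).
Hypotheses (n_ge2 : (2 <= n)%N) (r_ge4 : (4 <= r)%N).
Local Notation M := 'X_{1..n.+1}.
Local Notation G := (@I0_gen n r).
Local Notation standard u := (~ mnm_in_ideal G u).
Local Notation d := (r - 2).
(* The variables alpha_(n-2), alpha_(n-1), alpha_n; the variables alpha_j with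
   j <= n-2 are called low. *)
Local Notation iL := (inord (n - 2) : 'I_n.+1).
Local Notation iy := (inord (n - 1) : 'I_n.+1).
Local Notation iz := (inord n : 'I_n.+1).
Local Notation m_excl := (U_(iL) + U_(iz) *+ (r - 3))%MM.
Local Notation g_Lz := (U_(iL) + U_(iz) *+ (r - 2))%MM.
Local Notation g_pow := (U_(iy) *+ r)%MM.

Definition mYZ (a b : nat) : M := (U_(iy) *+ a + U_(iz) *+ b)%MM.
Definition mXYZ (j : 'I_n.+1) (s t : nat) : M := (U_(j) + U_(iy) *+ s + U_(iz) *+ t)%MM.

Lemma val_iL : nat_of_ord iL = (n - 2)%N. Proof. by rewrite inordK //; lia. Qed.
Lemma val_iy : nat_of_ord iy = (n - 1)%N. Proof. by rewrite inordK //; lia. Qed.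
Lemma val_iz : nat_of_ord iz = n. Proof. by rewrite inordK //; lia. Qed.
Lemma ord_eqE (j i : 'I_n.+1) : (j == i) = (nat_of_ord j == nat_of_ord i).
Proof. by []. Qed.

Ltac mnm_simpl := rewrite /mYZ /mXYZ
  ?(mnmDE, mnmBE, mulmnE, mnm1E, ord_eqE, val_iL, val_iy, val_iz).
Ltac mnm_solve := let i := fresh "i" in
  (apply/mnmP => i || apply/mnm_lepP => i); mnm_simpl; have := ltn_ord i; lia.

Lemma mdeg_mYZ a b : mdeg (mYZ a b) = (a + b)%N.
Proof. by rewrite /mYZ mdegD !mdegMn !mdeg1 !mul1n. Qed.

Lemma mdeg_mXYZ j s t : mdeg (mXYZ j s t) = (1 + s + t)%N.
Proof. by rewrite /mXYZ !mdegD !mdegMn !mdeg1 !mul1n. Qed.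

Lemma index_cases (i : 'I_n.+1) : (nat_of_ord i <= n - 2)%N \/ i = iy \/ i = iz.
Proof.
have := ltn_ord i; case: (leqP (nat_of_ord i) (n - 2)) => h1 h2; first by left.
right; have [e|e] : nat_of_ord i = (n - 1)%N \/ nat_of_ord i = n by lia.
  by left; apply: ord_inj; rewrite val_iy.
by right; apply: ord_inj; rewrite val_iz.
Qed.

Definition no_low (u : M) : Prop :=
  forall i : 'I_n.+1, (nat_of_ord i <= n - 2)%N -> u i = 0%N.

Lemma no_lowE u : no_low u -> u = mYZ (u iy) (u iz).
Proof.
move=> h; apply/mnmP => i; mnm_simpl.
case: (index_cases i) => [hi|[->|->]]; mnm_simpl; last 2 first.
- lia.
- lia.
by rewrite h //; lia.
Qed.

Lemma exists_low_of_not_no_low u : ~ no_low u ->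
  exists j : 'I_n.+1, (nat_of_ord j <= n - 2)%N /\ (0 < u j)%N.
Proof.
move=> h; apply: NNPP => ne; apply: h => i hi.
by case: (posnP (u i)) => // ui; case: ne; exists i.
Qed.

Lemma standard_mYZ a b : (a < r)%N -> standard (mYZ a b).
Proof.
move=> ha [g hg /mnm_lepP le].
case: hg le => [[_ [[j [hj gj]] _]]|[->|->]] le.
- by have := le j; mnm_simpl; lia.
- by have := le iL; mnm_simpl; lia.
- by have := le iy; mnm_simpl; lia.
Qed.

Lemma I0_gen_low (g : M) (j : 'I_n.+1) : mdeg g = d -> (nat_of_ord j <= n - 2)%N ->
  (0 < g j)%N -> g <> m_excl -> G g.
Proof. by move=> h1 h2 h3 h4; left; split => //; split => //; exists j. Qed.

Lemma I0_gen_mXYZ (j : 'I_n.+1) s t : (nat_of_ord j <= n - 2)%N -> (s + t = d - 1)%N ->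
  (nat_of_ord j != n - 2) || (0 < s)%N -> G (mXYZ j s t).
Proof.
move=> hj hst hne; apply: (@I0_gen_low _ j).
- by rewrite mdeg_mXYZ; lia.
- done.
- by mnm_simpl; lia.
case/orP: hne => hne.
  by move/mnmP => /(_ j); mnm_simpl; move: hne; rewrite /=; lia.
by move/mnmP => /(_ iy); mnm_simpl; lia.
Qed.

Lemma I0_gen_Lz : G g_Lz. Proof. by right; left. Qed.
Lemma I0_gen_pow : G g_pow. Proof. by right; right. Qed.

(* A standard monomial of degree >= r-2 involving a low variable is a
   multiple of the excluded monomial alpha_(n-2) alpha_n^(r-3)... *)
Lemma standard_low_excl_le (u : M) (j : 'I_n.+1) : (d <= mdeg u)%N -> standard u ->
  (nat_of_ord j <= n - 2)%N -> (0 < u j)%N -> (m_excl <= u)%MM.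
Proof.
move=> hd hu hj uj.
have ju : (U_(j) <= u)%MM by rewrite lep1mP; lia.
have [v [jv vu dv]] := @divisor_of_mdeg _ d U_(j) u ju ltac:(rewrite mdeg1; lia).
have vj : (0 < v j)%N by move: jv; rewrite lep1mP; lia.
have [ev|nev] := classic (v = m_excl); first by rewrite -ev.
by case: hu; exists v => //; apply: I0_gen_low vj nev.
Qed.

(* ... and then equal to it, since each proper multiple is divisible either
   by alpha_(n-2) alpha_n^(r-2) or by a degree-(r-2) generator. *)
Lemma standard_excl_le_eq (u : M) : standard u -> (m_excl <= u)%MM -> u = m_excl.
Proof.
move=> hu vu; apply: NNPP => neu.
have [i hi] : exists i, (m_excl i < u i)%N.
  have [/existsP[i hi]|/existsPn hh] := boolP [exists i, m_excl i < u i].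
    by exists i.
  case: neu; apply/mnmP => i; move/mnm_lepP: vu => /(_ i).
  by have := hh i; rewrite -leqNgt; lia.
case: (eqVneq i iz) => [ei|nei].
  apply: hu; exists g_Lz; first exact: I0_gen_Lz.
  apply/mnm_lepP => k; move/mnm_lepP: vu => /(_ k).
  rewrite ei in hi; move: hi; mnm_simpl.
  case: (eqVneq k iz) => [->|nk]; mnm_simpl; first lia.
  by move: nk; rewrite ord_eqE val_iz; lia.
apply: hu; exists (U_(iL) + U_(iz) *+ (r - 4) + U_(i))%MM.
  apply: (@I0_gen_low _ iL).
  - by rewrite !mdegD mdegMn !mdeg1; lia.
  - by rewrite val_iL.
  - by mnm_simpl; lia.
  - by move/mnmP => /(_ iz); mnm_simpl; move: nei; rewrite ord_eqE val_iz; lia.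
apply/mnm_lepP => k; move/mnm_lepP: vu => /(_ k).
case: (eqVneq k i) => [->|nk].
  by move: hi nei; rewrite ord_eqE val_iz; mnm_simpl; lia.
by move: nk; rewrite ord_eqE; mnm_simpl; lia.
Qed.

Lemma mdeg_m_excl : mdeg m_excl = d.
Proof. by rewrite mdegD mdegMn !mdeg1; lia. Qed.

Lemma mdeg_g_Lz : mdeg g_Lz = d.+1.
Proof. by rewrite mdegD mdegMn !mdeg1; lia. Qed.

Lemma mdeg_g_pow : mdeg g_pow = r.
Proof. by rewrite mdegMn mdeg1; lia. Qed.

Lemma standard_I0_shape (u : M) : (d <= mdeg u)%N -> standard u ->
  u = m_excl \/ exists2 a, (a <= mdeg u)%N & u = mYZ a (mdeg u - a).
Proof.
move=> hd hu; have [hnl|hl] := classic (no_low u); last first.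
  have [j [hj uj]] := exists_low_of_not_no_low hl.
  by left; apply/standard_excl_le_eq/(standard_low_excl_le hd hu hj uj).
have eu := no_lowE hnl; have du := congr1 mdeg eu; rewrite mdeg_mYZ in du.
by right; exists (u iy); [lia | rewrite {1}eu; congr mYZ; lia].
Qed.

Lemma mXYZ_of_single_low (g : M) (j : 'I_n.+1) : (nat_of_ord j <= n - 2)%N ->
  (0 < g j)%N -> no_low (g - U_(j))%MM -> g = mXYZ j (g iy) (g iz).
Proof.
move=> hj gj hnl; apply/mnmP => i; case: (index_cases i) => [hi|[->|->]]; last 2 first.
- by mnm_simpl; lia.
- by mnm_simpl; lia.
have := hnl i hi; case: (eqVneq i j) => [->|ne]; mnm_simpl; first lia.
by move: ne; rewrite ord_eqE; lia.
Qed.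

Definition mnms_deg_d : seq M :=
  [seq s2m t | t : d.-tuple 'I_n.+1 <- enum (basis n.+1 d)].

Definition low_indices : seq 'I_n.+1 := [seq inord k | k <- iota 0 (n - 2)].

Definition test_pair_deg_d (w : M) : M * M :=
  if w == m_excl then (g_pow, mYZ (r - 1) 1)
  else if [exists j : 'I_n.+1, (nat_of_ord j <= n - 2) && (0 < w j)%N]
  then (w, m_excl)
  else (g_pow, (w + U_(iz) *+ 2)%MM).

(* The determining set of positions: C(n+r-2, n) from degree r-2, two for each
   alpha_j alpha_n^(r-3) with j < n-2, and three for alpha_(n-2) alpha_n^(r-2). *)
Definition test_pairs : seq (M * M) :=
  [seq test_pair_deg_d w | w <- mnms_deg_d] ++
  [seq (mXYZ j 0 (d - 1), mYZ 0 d) | j <- low_indices] ++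
  [seq (mXYZ j 0 (d - 1), mYZ 1 (d - 1)) | j <- low_indices] ++
  [:: (g_Lz, mYZ 0 d.+1); (g_Lz, mYZ 1 d); (g_Lz, mYZ d.+1 0)].

Lemma size_test_pairs : size test_pairs = ('C(n + r - 2, n) + 2 * n - 1)%N.
Proof.
have size_deg_d : size mnms_deg_d = 'C(d + n, d) := size_basis n d.
rewrite /test_pairs !size_cat size_map size_deg_d !size_map size_iota /=.
have -> : (d + n = n + r - 2)%N by lia.
have -> : 'C(n + r - 2, d) = 'C(n + r - 2, n).
  by rewrite -bin_sub; [congr binomial; lia | lia].
by lia.
Qed.

Lemma mem_mnms_deg_d (w : M) : mdeg w = d -> w \in mnms_deg_d.
Proof. by move=> h; rewrite /mnms_deg_d -basis_cover h. Qed.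

Lemma mem_low_indices (j : 'I_n.+1) : (nat_of_ord j < n - 2)%N -> j \in low_indices.
Proof.
move=> hj; apply/mapP; exists (nat_of_ord j); first by rewrite mem_iota; lia.
by apply: ord_inj; rewrite inordK //; lia.
Qed.

Lemma mem_test_pairs_Lz a : (a == 0%N) || (a == 1%N) || (a == d.+1) ->
  (g_Lz, mYZ a (d.+1 - a)) \in test_pairs.
Proof.
move=> ha; rewrite /test_pairs !mem_cat; apply/orP; right; apply/orP; right.
apply/orP; right; rewrite !inE.
case/orP: ha => [/orP[]|] /eqP ->.
- by rewrite subn0 eqxx.
- by rewrite subSS subn0 eqxx !orbT.
- by rewrite subnn eqxx !orbT.
Qed.

Section Vanishing.
Variables (K : fieldType) (C : M -> M -> K).
Hypotheses (C_syz : syzygy_compatible G C) (C_deg : degree_compatible G C).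
Hypothesis C_test : forall x, x \in test_pairs -> C x.1 x.2 = 0%R.

Lemma coef_transfer g g' u w w' : G g -> G g' -> (g' - g)%MM = w -> (g - g')%MM = w' ->
  standard (u + w)%MM ->
  C g u = if (w' <= u + w)%MM then C g' (u + w - w')%MM else 0%R.
Proof.
move=> hg hg' e1 e2 hv; have := C_syz hg hg' hv.
by rewrite /shifted_coef e1 e2 lem_addl addmK.
Qed.

(* Coefficients of alpha_j alpha_(n-1)^s alpha_n^t at alpha_(n-1)^a alpha_n^(r-2-a):
   for a < s they vanish via the syzygy with alpha_(n-1)^r, ... *)
Lemma coef_mXYZ_below (j : 'I_n.+1) s t a : (nat_of_ord j <= n - 2)%N ->
  (s + t = d - 1)%N -> G (mXYZ j s t) -> (a < s)%N -> (a <= d)%N ->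
  C (mXYZ j s t) (mYZ a (d - a)) = 0%R.
Proof.
move=> hj hst hg has had.
rewrite (@coef_transfer _ g_pow _ (U_(iy) *+ (r - s)) (U_(j) + U_(iz) *+ t) hg I0_gen_pow).
- by rewrite (negbTE (@lem_not_of_lt _ _ _ j _)) //; mnm_simpl; lia.
- by mnm_solve.
- by mnm_solve.
have -> : (mYZ a (d - a) + U_(iy) *+ (r - s))%MM = mYZ (a + (r - s)) (d - a).
  by mnm_solve.
by apply: standard_mYZ; lia.
Qed.

(* ... for a >= s + 2 they vanish by trading alpha_n for alpha_(n-1) ... *)
Lemma coef_mXYZ_above (j : 'I_n.+1) t : (nat_of_ord j <= n - 2)%N ->
  forall s a, (s + t = d - 1)%N -> G (mXYZ j s t) -> (s + 2 <= a <= d)%N ->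
  C (mXYZ j s t) (mYZ a (d - a)) = 0%R.
Proof.
move=> hj; elim: t => [|t ih] s a hst hg /andP[hsa had]; first by lia.
have hg' : G (mXYZ j s.+1 t) by apply: I0_gen_mXYZ => //; lia.
rewrite (@coef_transfer _ (mXYZ j s.+1 t) _ U_(iy) U_(iz) hg hg'); first last.
- have -> : (mYZ a (d - a) + U_(iy))%MM = mYZ a.+1 (d - a) by mnm_solve.
  by apply: standard_mYZ; lia.
- by mnm_solve.
- by mnm_solve.
have [->|nad] := eqVneq a d.
  by rewrite (negbTE (@lem_not_of_lt _ _ _ iz _)) //; mnm_simpl; lia.
have -> : (U_(iz) <= mYZ a (d - a) + U_(iy))%MM by mnm_solve.
have -> : (mYZ a (d - a) + U_(iy) - U_(iz))%MM = mYZ a.+1 (d - a.+1) by mnm_solve.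
by apply: ih => //; lia.
Qed.

Lemma mXYZ_Lz_diff :
  (mXYZ iL 1 (d - 2) - g_Lz = U_(iy))%MM /\ (g_Lz - mXYZ iL 1 (d - 2) = U_(iz) *+ 2)%MM.
Proof. by split; mnm_solve. Qed.

(* ... and for a in {s, s+1} they are reduced, by trading alpha_(n-1) for
   alpha_n, to the test positions (s = 0) or to alpha_(n-2) alpha_n^(r-2). *)
Lemma coef_mXYZ_diag (j : 'I_n.+1) s : (nat_of_ord j <= n - 2)%N ->
  forall t a, (s + t = d - 1)%N -> (nat_of_ord j != n - 2) || (0 < s)%N ->
  (a = s \/ a = s.+1) -> C (mXYZ j s t) (mYZ a (d - a)) = 0%R.
Proof.
move=> hj; elim: s => [|s ih] t a hst hne ha.
  have hj' : (nat_of_ord j < n - 2)%N by move: hne; rewrite /=; lia.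
  have -> : t = (d - 1)%N by lia.
  apply: (C_test (x := (mXYZ j 0 (d - 1), mYZ a (d - a)))).
  rewrite /test_pairs !mem_cat; case: ha => ->; apply/orP; right; apply/orP;
    [left | right; apply/orP; left]; apply/mapP; exists j;
    rewrite ?mem_low_indices ?subn0 //.
have hg : G (mXYZ j s.+1 t) by apply: I0_gen_mXYZ.
have [/andP[/eqP ej /eqP es]|hne'] := boolP ((nat_of_ord j == n - 2) && (s == 0%N)).
  have ejL : j = iL by apply: ord_inj; rewrite val_iL.
  have et : t = (d - 2)%N by lia.
  subst j s t; case: mXYZ_Lz_diff => e1 e2.
  rewrite (@coef_transfer _ g_Lz _ (U_(iz) *+ 2) U_(iy) hg I0_gen_Lz e2 e1); last first.
    have -> : (mYZ a (d - a) + U_(iz) *+ 2)%MM = mYZ a (d - a + 2) by mnm_solve.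
    by apply: standard_mYZ; lia.
  have -> : (U_(iy) <= mYZ a (d - a) + U_(iz) *+ 2)%MM by mnm_solve.
  have -> : (mYZ a (d - a) + U_(iz) *+ 2 - U_(iy))%MM = mYZ a.-1 (d.+1 - a.-1).
    by mnm_solve.
  apply: (C_test (x := (g_Lz, _))); apply: mem_test_pairs_Lz.
  by case: ha => ->.
have hg' : G (mXYZ j s t.+1) by apply: I0_gen_mXYZ; lia.
rewrite (@coef_transfer _ (mXYZ j s t.+1) _ U_(iz) U_(iy) hg hg'); first last.
- have -> : (mYZ a (d - a) + U_(iz))%MM = mYZ a (d - a).+1 by mnm_solve.
  by apply: standard_mYZ; lia.
- by mnm_solve.
- by mnm_solve.
have -> : (U_(iy) <= mYZ a (d - a) + U_(iz))%MM by mnm_solve.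
have -> : (mYZ a (d - a) + U_(iz) - U_(iy))%MM = mYZ a.-1 (d - a.-1) by mnm_solve.
by apply: ih; lia.
Qed.

Lemma coef_mXYZ (j : 'I_n.+1) s t a : (nat_of_ord j <= n - 2)%N -> (s + t = d - 1)%N ->
  (nat_of_ord j != n - 2) || (0 < s)%N -> (a <= d)%N ->
  C (mXYZ j s t) (mYZ a (d - a)) = 0%R.
Proof.
move=> hj hst hne had; have hg : G (mXYZ j s t) by apply: I0_gen_mXYZ.
have [h1|h1] := ltnP a s; first exact: coef_mXYZ_below.
have [h2|h2] := leqP (s + 2) a; first by apply: coef_mXYZ_above => //; lia.
by apply: coef_mXYZ_diag => //; lia.
Qed.


(* The coefficients of a degree-(r-2) generator g at alpha_(n-1)^a alpha_n^(r-2-a)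
   vanish: either g = alpha_j alpha_(n-1)^s alpha_n^t, or g has a second low
   variable and trading its alpha_j for alpha_(n-1) leaves the ideal-free range. *)
Lemma coef_deg_d (g : M) (j : 'I_n.+1) a : mdeg g = d -> (nat_of_ord j <= n - 2)%N ->
  (0 < g j)%N -> g <> m_excl -> (a <= d)%N -> C g (mYZ a (d - a)) = 0%R.
Proof.
move=> dg hj gj gm ha; have hg : G g by apply: I0_gen_low gj gm.
have [hnl|hl] := classic (no_low (g - U_(j))).
  have eg := mXYZ_of_single_low hj gj hnl.
  have hst : (g iy + g iz = d - 1)%N by move: dg; rewrite {1}eg mdeg_mXYZ; lia.
  rewrite eg; apply: coef_mXYZ => //.
  apply/negP => /negP; rewrite negb_or !negbK => /andP[/eqP ej hs].
  apply: gm; rewrite eg; have ejL : j = iL by apply: ord_inj; rewrite val_iL.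
  by subst j; apply/mnmP => i; mnm_simpl; lia.
have [k [hk gk]] := exists_low_of_not_no_low hl.
have jg : (U_(j) <= g)%MM by rewrite lep1mP; lia.
have dsub : (mdeg (g - U_(j)) + 1 = d)%N by rewrite -dg -{2}(submK jg) mdegD mdeg1.
have hg' : G (g - U_(j) + U_(iy))%MM.
  apply: (@I0_gen_low _ k) => //.
  - by rewrite mdegD mdeg1.
  - by rewrite mnmDE; lia.
  - by move/mnmP => /(_ iy); mnm_simpl; lia.
have [e1 e2] : (g - U_(j) + U_(iy) - g = U_(iy))%MM /\ (g - (g - U_(j) + U_(iy)) = U_(j))%MM.
  by split; apply/mnmP => i; mnm_simpl;
    (case: (eqVneq i j) => [->|ne]; mnm_simpl; [lia | move: ne; rewrite ord_eqE; lia]).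
rewrite (@coef_transfer _ (g - U_(j) + U_(iy))%MM _ U_(iy) U_(j) hg hg' e1 e2); last first.
  have -> : (mYZ a (d - a) + U_(iy))%MM = mYZ a.+1 (d - a) by mnm_solve.
  by apply: standard_mYZ; lia.
by rewrite (negbTE (@lem_not_of_lt _ _ _ j _)) //; mnm_simpl; lia.
Qed.

Lemma coef_gen_deg_d (g u : M) : mdeg g = d ->
  (exists j : 'I_n.+1, (nat_of_ord j <= n - 2)%N /\ (0 < g j)%N) -> g <> m_excl ->
  standard u -> mdeg u = d -> C g u = 0%R.
Proof.
move=> dg [j [hj gj]] gm hu du.
have [eu|[a ha eu]] := standard_I0_shape (eq_leq (esym du)) hu; rewrite eu; last first.
  by rewrite du in ha *; apply: coef_deg_d gj gm ha.
apply: (C_test (x := (g, m_excl))); rewrite /test_pairs mem_cat; apply/orP; left.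
apply/mapP; exists g; first exact: mem_mnms_deg_d.
rewrite /test_pair_deg_d; case: eqP => // _.
by case: existsP => // [[]]; exists j; rewrite hj gj.
Qed.

(* The coefficients of alpha_(n-2) alpha_n^(r-2) reduce, via the syzygy with
   alpha_(n-2) alpha_(n-1) alpha_n^(r-4), to the test positions. *)
Lemma coef_g_Lz u : standard u -> mdeg u = d.+1 -> C g_Lz u = 0%R.
Proof.
move=> hu du; have hdu : (d <= mdeg u)%N by rewrite du leqnSn.
have [eu|[a ha eu]] := standard_I0_shape hdu hu.
  by move: du; rewrite eu mdeg_m_excl; lia.
rewrite eu; rewrite du in ha *.
have [hb|hb] := boolP ((a == 0%N) || (a == 1%N) || (a == d.+1)).
  exact: (C_test (mem_test_pairs_Lz hb)).
case: mXYZ_Lz_diff => e1 e2.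
have hg : G (mXYZ iL 1 (d - 2)) by apply: I0_gen_mXYZ; rewrite ?val_iL; lia.
rewrite (@coef_transfer _ (mXYZ iL 1 (d - 2)) _ U_(iy) (U_(iz) *+ 2) I0_gen_Lz hg e1 e2).
  have [ead|nad] := eqVneq a d.
    by rewrite (negbTE (@lem_not_of_lt _ _ _ iz _)) //; mnm_simpl; lia.
  have -> : (U_(iz) *+ 2 <= mYZ a (d.+1 - a) + U_(iy))%MM by mnm_solve.
  have -> : (mYZ a (d.+1 - a) + U_(iy) - U_(iz) *+ 2)%MM = mYZ a.+1 (d - a.+1).
    by mnm_solve.
  by apply: (@coef_mXYZ_above iL (d - 2) _ 1) => //; rewrite ?val_iL //; lia.
have -> : (mYZ a (d.+1 - a) + U_(iy))%MM = mYZ a.+1 (d.+1 - a) by mnm_solve.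
by apply: standard_mYZ; lia.
Qed.

(* The coefficients of alpha_(n-1)^r are test positions. *)
Lemma coef_g_pow u : standard u -> mdeg u = r -> C g_pow u = 0%R.
Proof.
move=> hu du; have hdu : (d <= mdeg u)%N by rewrite du; lia.
have [eu|[a ha eu]] := standard_I0_shape hdu hu.
  by move: du; rewrite eu mdeg_m_excl; lia.
rewrite du in ha eu; rewrite eu.
have har : (a < r)%N.
  rewrite ltnNge; apply/negP => le; apply: hu; exists g_pow; first exact: I0_gen_pow.
  by rewrite eu; apply/mnm_lepP => i; mnm_simpl; lia.
apply: (C_test (x := (g_pow, mYZ a (r - a)))).
rewrite /test_pairs mem_cat; apply/orP; left; apply/mapP.
have [had|ea] := leqP a d.
  exists (mYZ a (d - a)); first by apply: mem_mnms_deg_d; rewrite mdeg_mYZ; lia.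
  rewrite /test_pair_deg_d.
  have -> : (mYZ a (d - a) == m_excl) = false.
    by apply/negP => /eqP /mnmP /(_ iL); mnm_simpl; lia.
  case: existsP => [[j /andP[hj]]|_]; first by mnm_simpl; lia.
  by congr pair; mnm_solve.
exists m_excl; first by apply: mem_mnms_deg_d; rewrite mdeg_m_excl.
by rewrite /test_pair_deg_d eqxx; congr pair; congr mYZ; lia.
Qed.

(* By homogeneity only standard monomials of the generator's degree matter. *)
Lemma I0_coef_vanish g u : G g -> standard u -> C g u = 0%R.
Proof.
move=> hg hu; have [e|ne] := eqVneq (mdeg u) (mdeg g); last exact: C_deg.
case: hg e => [[dg [hlow gm]]|[->|->]] e.
- by apply: coef_gen_deg_d; rewrite ?e.
- by apply: coef_g_Lz; rewrite ?e ?mdeg_g_Lz.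
- by apply: coef_g_pow; rewrite ?e ?mdeg_g_pow.
Qed.

End Vanishing.

End StandardMonomialsI0.

Local Open Scope ring_scope.

Theorem lemma2p10 (K : closedFieldType) (n r : nat) :
  (2 <= n)%N -> (4 <= r)%N ->
  hom0_dim_le (@in_mideal K n.+1 (I0_gen r))
    ('C(n + r - 2, n) + 2 * n - 1)%N.
Proof.
move=> hn hr; apply: (hom0_dim_le_of_determining (L := test_pairs n r)).
  by rewrite size_test_pairs.
by move=> C C_syz C_deg C_test g u; apply: I0_coef_vanish.
Qed.
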